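(* Under the standing assumptions, let $\{x_i\}_{i=1}^N$ be a solution of the delayed Hegselmann–Krause system. Then for every $n\in\mathbb{N}_0$ and all $i,j=1,\dots,N$, $$|x_i(s)-x_j(t)|\le D_n\qquad\text{for all } s,t\ge n\bar\tau-\bar\tau.$$ In particular $|x_i(s)-x_j(t)|\le D_0$ for all $s,t\ge-\bar\tau$, and $D_{n+1}\le D_n$ for all $n\in\mathbb{N}_0$.
   Context: Standing assumptions: $N\ge 2$, $d\ge 1$, $\bar\tau>0$; $\tau:[0,\infty)\to[0,\bar\tau]$ continuous; $\psi:\mathbb{R}^d\times\mathbb{R}^d\to\mathbb{R}$ continuous, bounded and strictly positive, $K:=\|\psi\|_\infty$; initial data $x_i^0:[-\bar\tau,0]\to\mathbb{R}^d$ continuous. The delayed Hegselmann–Krause system is $$\frac{d}{dt}x_i(t)=\frac{1}{N-1}\sum_{j\ne i}\psi\big(x_i(t),x_j(t-\tau(t))\big)\big(x_j(t-\tau(t))-x_i(t)\big),\quad t>0,$$ with $x_i=x_i^0$ on $[-\bar\tau,0]$; a solution means continuous $x_i:[-\bar\tau,\infty)\to\mathbb{R}^d$, differentiable on $(0,\infty)$, satisfying this. $\mathbb{N}_0=\{0,1,2,\dots\}$. For $n\in\mathbb{N}_0$, $D_n:=\max_{i,j=1,\dots,N}\max_{s,t\in[n\bar\tau-\bar\tau,\,n\bar\tau]}|x_i(s)-x_j(t)|$. *)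

From HB Require Import structures.
From mathcomp Require Import all_boot all_order all_algebra.
From mathcomp Require Import all_classical all_reals all_analysis.
Set Implicit Arguments. Unset Strict Implicit. Unset Printing Implicit Defensive.
Import Order.TTheory GRing.Theory Num.Theory.
Import numFieldNormedType.Exports.
Local Open Scope classical_set_scope.
Local Open Scope ring_scope.

Definition enorm {R : realType} {d : nat} (v : 'rV[R]_d) : R :=
  Num.sqrt (\sum_(k < d) (v ord0 k) ^+ 2).

Definition hk_rhs {R : realType} {N d : nat}
  (psi : 'rV[R]_d -> 'rV[R]_d -> R) (tau : R -> R)
  (x : 'I_N -> R -> 'rV[R]_d) (i : 'I_N) (t : R) : 'rV[R]_d :=
  (N.-1%:R)^-1 *: \sum_(j < N | j != i)
     psi (x i t) (x j (t - tau t)) *: (x j (t - tau t) - x i t).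

Definition hk_solution {R : realType} {N d : nat}
  (psi : 'rV[R]_d -> 'rV[R]_d -> R) (tau : R -> R) (taubar : R)
  (x0 : 'I_N -> R -> 'rV[R]_d) (x : 'I_N -> R -> 'rV[R]_d) : Prop :=
  (forall i, {within `[- taubar, +oo[, continuous (x i)}) /\
  (forall i t, - taubar <= t <= 0 -> x i t = x0 i t) /\
  (forall i t, 0 < t -> derivable (x i) t 1 /\
                        'D_1 (x i) t = hk_rhs psi tau x i t).

Definition Dn {R : realType} {N d : nat} (taubar : R)
  (x : 'I_N -> R -> 'rV[R]_d) (n : nat) : R :=
  sup [set r | exists i j s t,
        n%:R * taubar - taubar <= s <= n%:R * taubar /\
        n%:R * taubar - taubar <= t <= n%:R * taubar /\
        r = enorm (x i s - x j t)].

From HB Require Import structures.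
From mathcomp Require Import all_boot all_order all_algebra.
From mathcomp Require Import all_classical all_reals all_analysis.
From mathcomp Require Import ring lra.
Import Order.TTheory GRing.Theory Num.Theory.
Import numFieldNormedType.Exports.
Local Open Scope classical_set_scope.
Local Open Scope ring_scope.

(* The squared distance to a fixed point c cannot increase for the agent that
   is farthest from c: its velocity is a nonnegative combination of the vectors
   from it to delayed positions, all of which lie at most as far from c. Hence a
   closed ball containing every trajectory on a time window of length taubar
   contains every trajectory forever after. Taking as centres the positions in
   the n-th window, and then any position at a later time, bounds each distance
   |x_i(s) - x_j(t)| with s, t >= n taubar - taubar by D_n. *)

Section EuclideanRow.
Context {R : realType} {d : nat}.
Implicit Types (u v : 'rV[R]_d) (D : R).

Definition dotv u v : R := \sum_(k < d) u ord0 k * v ord0 k.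
Definition sqnorm u : R := \sum_(k < d) u ord0 k ^+ 2.

Lemma enormE u : enorm u = Num.sqrt (sqnorm u).
Proof. by []. Qed.

Lemma dotvNr u v : dotv u (- v) = - dotv u v.
Proof. by rewrite /dotv -sumrN; apply: eq_bigr => k _; rewrite mxE mulrN. Qed.

Lemma dotvZr u v a : dotv u (a *: v) = a * dotv u v.
Proof. by rewrite /dotv mulr_sumr; apply: eq_bigr => k _; rewrite mxE mulrCA. Qed.

Lemma dotv_sumr (I : finType) (P : pred I) u (F : I -> 'rV[R]_d) :
  dotv u (\sum_(j | P j) F j) = \sum_(j | P j) dotv u (F j).
Proof.
by rewrite /dotv exchange_big; apply: eq_bigr => k _; rewrite summxE mulr_sumr.
Qed.

Lemma sqnorm_ge0 u : 0 <= sqnorm u.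
Proof. by apply: sumr_ge0 => k _; exact: sqr_ge0. Qed.

Lemma sqnormD u v : sqnorm (u + v) = sqnorm u + 2 * dotv u v + sqnorm v.
Proof.
rewrite /sqnorm /dotv mulr_sumr -!big_split; apply: eq_bigr => k _.
by rewrite !mxE /=; ring.
Qed.

Lemma sqnormN u : sqnorm (- u) = sqnorm u.
Proof. by apply: eq_bigr => k _; rewrite mxE sqrrN. Qed.

Lemma sqnormB_sym u v : sqnorm (u - v) = sqnorm (v - u).
Proof. by rewrite -sqnormN opprB. Qed.

Lemma sqnormB_le u v : sqnorm (u - v) <= 2 * sqnorm u + 2 * sqnorm v.
Proof.
have := sqnormD u (- v); rewrite sqnormN dotvNr.
have := sqnormD u v; have := sqnorm_ge0 (u + v); lra.
Qed.

Lemma dotv_sqnorm_le u v : 2 * dotv u (v - u) <= sqnorm v - sqnorm u.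
Proof.
have := sqnormD u (v - u); rewrite addrC subrK => ->.
have := sqnorm_ge0 (v - u); lra.
Qed.

Lemma enorm_ge0 u : 0 <= enorm u.
Proof. exact: sqrtr_ge0. Qed.

Lemma enorm_le u D : 0 <= D -> (enorm u <= D) = (sqnorm u <= D ^+ 2).
Proof. by move=> D0; rewrite enormE -[D in LHS]ger0_norm // -sqrtr_sqr ler_sqrt ?sqr_ge0. Qed.

Lemma dotv_continuous u : continuous (dotv u).
Proof.
apply: (continuous_big add_continuous) => k _ w.
apply: (@continuousM _ _ (fun=> u ord0 k) (fun w : 'rV[R]_d => w ord0 k)).
  exact: cst_continuous.
exact: coord_continuous.
Qed.

Lemma sqnorm_continuous : continuous sqnorm.
Proof.
apply: (continuous_big add_continuous) => k _ w.
by apply: (@continuousM _ _ (fun w : 'rV[R]_d => w ord0 k)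
  (fun w : 'rV[R]_d => w ord0 k)); exact: coord_continuous.
Qed.

Lemma sqnormB_continuous v : continuous (fun u => sqnorm (u - v)).
Proof.
move=> u; apply: (@continuous_comp _ _ _ (fun w : 'rV[R]_d => w - v) sqnorm).
  by apply: continuousB; [exact: cvg_id | exact: cst_continuous].
exact: sqnorm_continuous.
Qed.

Lemma within_sqnormB_continuous {A : set R} {f : R -> 'rV[R]_d} v :
  {within A, continuous f} -> {within A, continuous (fun s => sqnorm (f s - v))}.
Proof.
move=> hf s.
exact: (@continuous_comp _ _ _ (from_subspace A f) (fun u => sqnorm (u - v)) s
  (hf s) (sqnormB_continuous v _)).
Qed.

End EuclideanRow.

Lemma sqnorm_left_growth {R : realType} {d : nat} {f : R -> 'rV[R]_d}
    {c : 'rV[R]_d} {T k : R} :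
  derivable f T 1 -> dotv (f T - c) ('D_1 f T) < k ->
  exists2 del : R, 0 < del & forall h, - del < h < 0 ->
    sqnorm (f T - c) + 2 * k * h < sqnorm (f (T + h) - c).
Proof.
set a := f T - c => df hk.
have quot : (fun h : R => dotv a (h^-1 *: (f (h *: 1 + T) - f T))) @ 0^'
    --> dotv a ('D_1 f T).
  exact: continuous_cvg _ (dotv_continuous a _) df.
have : \forall h \near 0^', dotv a (h^-1 *: (f (h *: 1 + T) - f T)) < k.
  exact: cvgr_lt _ quot _ hk.
rewrite near_withinE => /nbhs_normP[del del0 hdel].
exists del => // h /andP[hdel' h0].
have /= := hdel h; rewrite sub0r normrN ltr0_norm // => /(_ _ (ltr0_neq0 h0)).
rewrite ltrNl /GRing.scale /= mulr1 dotvZr => /(_ hdel') hq.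
set De := f (h + T) - f T.
have -> : f (T + h) - c = a + De by rewrite /a /De (addrC h) [RHS]addrC -addrA addKr.
have hDe : h * k < dotv a De.
  by rewrite -[dotv a De](mulVKf (ltr0_neq0 h0)) ltr_nM2l.
have := sqnormD a De; have := sqnorm_ge0 De; lra.
Qed.

Lemma hk_rhs_inward {R : realType} {N d : nat} (psi : 'rV[R]_d -> 'rV[R]_d -> R)
    (tau : R -> R) (x : 'I_N -> R -> 'rV[R]_d) (i : 'I_N) (t : R) (c : 'rV[R]_d) :
  (forall y z, 0 <= psi y z) ->
  (forall j, sqnorm (x j (t - tau t) - c) <= sqnorm (x i t - c)) ->
  dotv (x i t - c) (hk_rhs psi tau x i t) <= 0.
Proof.
move=> psi0 delayed_closer; rewrite /hk_rhs dotvZr dotv_sumr.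
apply: mulr_ge0_le0; first by rewrite invr_ge0 ler0n.
apply: sumr_le0 => j _; rewrite dotvZr; apply: mulr_ge0_le0; first exact: psi0.
have -> : x j (t - tau t) - x i t = (x j (t - tau t) - c) - (x i t - c).
  by rewrite opprB addrA subrK.
have := dotv_sqnorm_le (x i t - c) (x j (t - tau t) - c).
have := delayed_closer j; lra.
Qed.

Lemma first_crossing {R : realType} {I : finType} {g : I -> R -> R} {b : R -> R}
    {t0 : R} :
  {homo b : s t / s <= t} ->
  (forall l, {within `[t0, +oo[, continuous (g l)}) ->
  (exists l s, t0 <= s /\ b s <= g l s) ->
  exists T, [/\ t0 <= T, forall l s, t0 <= s < T -> g l s < b s
              & exists l, b T <= g l T].
Proof.
move=> bmono gcont [l0 [s0 [hs0 hl0]]].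
pose A := [set s | t0 <= s /\ exists l, b s <= g l s].
have lbA : lbound A t0 by move=> s [].
have A0 : A s0 by split => //; exists l0.
have infA : has_inf A by split; [exists s0 | exists t0].
have t0T : t0 <= inf A by apply: lb_le_inf; first exists s0.
exists (inf A); split => //.
  move=> l s /andP[hs sT]; rewrite ltNge; apply/negP => hl.
  by have := ge_inf (ex_intro _ t0 lbA) (conj hs (ex_intro _ l hl)); lra.
apply: contrapT => /forallNP no_hit.
have below : forall l, g l (inf A) < b (inf A).
  by move=> l; rewrite ltNge; exact/negP/no_hit.
have Tdom : `[t0, +oo[%classic (inf A) by rewrite /= in_itv /= andbT.
have : \forall s \near within `[t0, +oo[ (nbhs (inf A)), forall l, g l s < b (inf A).
  apply: filter_forall => l; apply: cvgr_lt (below l).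
  by have := gcont l (inf A); rewrite /= nbhs_subspace_in.
rewrite near_withinE => /nbhs_normP[del del0 hdel].
have [s [hs [l hl]] sdel] := inf_adherent del0 infA.
have Ts : inf A <= s := ge_inf (ex_intro _ t0 lbA) (conj hs (ex_intro _ l hl)).
have := hdel s; rewrite /= distrC ger0_norm ?subr_ge0 // in_itv /= andbT.
have := bmono _ _ Ts; move=> /= bTs /(_ _ hs l); lra.
Qed.

Section BallInvariance.
Context {R : realType} {N d : nat}.
Context {psi : 'rV[R]_d -> 'rV[R]_d -> R} {tau : R -> R} {taubar : R}.
Context {x0 x : 'I_N -> R -> 'rV[R]_d}.
Hypothesis tau_range : forall t, 0 <= t -> 0 <= tau t <= taubar.
Hypothesis psi_ge0 : forall y z, 0 <= psi y z.
Hypothesis x_sol : hk_solution psi tau taubar x0 x.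
Context {c : 'rV[R]_d} {r t0 : R}.
Hypothesis t0_ge : 0 <= t0 + taubar.
Hypothesis ball_window :
  forall l s, t0 <= s <= t0 + taubar -> sqnorm (x l s - c) <= r.

Let g l s := sqnorm (x l s - c).

(* The barrier exceeds [r] on the initial window, so a first contact can only
   happen at some T > t0 + taubar. The agent farthest from [c] at time T is
   also farther than every delayed position, so it moves inward by
   [hk_rhs_inward]; but it reached the barrier from below, and the barrier
   grows at rate [eps]. *)
Lemma hk_sqdist_barrier {eps : R} : 0 < eps ->
  forall l s, t0 <= s -> g l s < r + eps * (s - t0 + 1).
Proof.
move=> eps0; pose b s := r + eps * (s - t0 + 1).
have bmono : {homo b : s t / s <= t}.
  by move=> s t st; rewrite /b lerD2l ler_pM2l //; lra.
have window_below : forall l s, t0 <= s <= t0 + taubar -> g l s < b s.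
  move=> l s /[dup] /andP[hs _] /(ball_window l).
  have : 0 < eps * (s - t0 + 1) by apply: mulr_gt0 => //; lra.
  rewrite /g /b; lra.
have gcont l : {within `[t0, +oo[, continuous (g l)}.
  apply: within_sqnormB_continuous; apply: continuous_subspaceW (x_sol.1 l) => s.
  by rewrite /= !in_itv /= !andbT; have := t0_ge; lra.
case: (pselect (exists l s, t0 <= s /\ b s <= g l s)); last first.
  move=> /forallNP no_hit l s hs; rewrite ltNge; apply/negP => hl.
  exact: no_hit l (ex_intro _ s (conj hs hl)).
move=> /(first_crossing bmono gcont)[T [t0T before [l hl]]].
have T_late : t0 + taubar < T.
  by rewrite ltNge; apply/negP => hT; have := window_below l T; rewrite t0T hT; lra.
pose m := [arg max_(j > l) g j T]%O.
have m_max j : g j T <= g m T by rewrite /m; case: arg_maxP => //= k _; exact.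
have T_pos : 0 < T by have := t0_ge; lra.
have /andP[tauT_ge0 tauT_le] := tau_range T (ltW T_pos).
have [dxm Dxm] := x_sol.2.2 m T T_pos.
have inward : dotv (x m T - c) ('D_1 (x m) T) < eps / 2.
  suff : dotv (x m T - c) ('D_1 (x m) T) <= 0 by lra.
  rewrite Dxm; apply: hk_rhs_inward => // j.
  case: (eqVneq (tau T) 0) => [-> | tauT0]; first by rewrite subr0; exact: m_max.
  have tauT_gt0 : 0 < tau T by rewrite lt0r tauT0.
  have := before j (T - tau T) ltac:(apply/andP; split; lra).
  have := bmono _ _ (ltac:(lra) : T - tau T <= T).
  have := le_trans hl (m_max l); rewrite /g; lra.
have [del del0 grow] := sqnorm_left_growth dxm inward.
pose h := - Num.min del (T - t0) / 2.
have h_del : Num.min del (T - t0) <= del by rewrite ge_min lexx.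
have h_T : Num.min del (T - t0) <= T - t0 by rewrite ge_min lexx orbT.
have h_neg : 0 < Num.min del (T - t0) by rewrite lt_min del0 /=; lra.
have := grow h ltac:(apply/andP; split; rewrite /h; lra).
have := before m (T + h) ltac:(apply/andP; split; rewrite /h; lra).
have := le_trans hl (m_max l); rewrite /g /b; lra.
Qed.

Lemma hk_ball_invariant i t : t0 <= t -> sqnorm (x i t - c) <= r.
Proof.
move=> t0t; apply/ler_addgt0Pr => e e0.
have span0 : 0 < t - t0 + 1 by lra.
have := hk_sqdist_barrier (divr_gt0 e0 span0) i t t0t.
by rewrite divfK ?gt_eqF // => /ltW.
Qed.

End BallInvariance.

Lemma sqnorm_bounded_segment {R : realType} {d : nat} {f : R -> 'rV[R]_d} {lo hi : R} :
  lo <= hi -> {within `[lo, hi], continuous f} ->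
  exists M, forall s, lo <= s <= hi -> sqnorm (f s) <= M.
Proof.
move=> lohi /(within_sqnormB_continuous 0)/(EVT_max lohi)[c _ maxc].
by exists (sqnorm (f c - 0)) => s hs; have := maxc s; rewrite in_itv /= hs !subr0; apply.
Qed.

Section Diameter.
Context {R : realType} {N d : nat}.
Context {taubar : R} {x : 'I_N -> R -> 'rV[R]_d}.
Hypothesis taubar_gt0 : 0 < taubar.
Hypothesis x_cont : forall i, {within `[- taubar, +oo[, continuous (x i)}.

Let window_end_mem (n : nat) :
  n%:R * taubar - taubar <= n%:R * taubar <= n%:R * taubar.
Proof. by rewrite lexx andbT gerBl ltW. Qed.

Lemma window_dist_bounded (n : nat) : exists B, forall i j s t,
  n%:R * taubar - taubar <= s <= n%:R * taubar ->
  n%:R * taubar - taubar <= t <= n%:R * taubar ->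
  enorm (x i s - x j t) <= B.
Proof.
set lo := n%:R * taubar - taubar; set hi := n%:R * taubar.
have hi_ge0 : 0 <= hi by rewrite mulr_ge0 ?ler0n ?ltW.
have lohi : lo <= hi by rewrite /lo gerBl ltW.
have lo_ge : - taubar <= lo by have := hi_ge0; rewrite /lo /hi; lra.
have x_seg i : {within `[lo, hi], continuous (x i)}.
  apply: continuous_subspaceW (x_cont i) => s.
  by rewrite /= !in_itv /= andbT => /andP[lo_s _]; exact: le_trans lo_s.
have [M hM] := choice (fun i => sqnorm_bounded_segment lohi (x_seg i)).
have M_ge0 i : 0 <= M i.
  by apply: le_trans (sqnorm_ge0 (x i hi)) (hM i hi _); rewrite lohi lexx.
have M_le_sum i : M i <= \sum_k M k.
  by rewrite (bigD1 i) //= lerDl sumr_ge0.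
exists (Num.sqrt (4 * \sum_k M k)) => i j s t hs ht.
rewrite enormE ler_sqrt ?mulr_ge0 ?sumr_ge0 //.
have := sqnormB_le (x i s) (x j t).
have := le_trans (hM i s hs) (M_le_sum i); have := le_trans (hM j t ht) (M_le_sum j).
lra.
Qed.

Lemma le_Dn {n : nat} i j {s t} :
  n%:R * taubar - taubar <= s <= n%:R * taubar ->
  n%:R * taubar - taubar <= t <= n%:R * taubar ->
  enorm (x i s - x j t) <= Dn taubar x n.
Proof.
move=> hs ht; have [B hB] := window_dist_bounded n.
apply: ub_le_sup; last by exists i, j, s, t.
by exists B => _ [i' [j' [s' [t' [hs' [ht' ->]]]]]]; exact: hB.
Qed.

Lemma Dn_ge0 (i : 'I_N) (n : nat) : 0 <= Dn taubar x n.
Proof.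
exact: le_trans (enorm_ge0 _) (le_Dn i i (window_end_mem n) (window_end_mem n)).
Qed.

Lemma Dn_le (i : 'I_N) (n : nat) B :
  (forall i j s t,
    n%:R * taubar - taubar <= s <= n%:R * taubar ->
    n%:R * taubar - taubar <= t <= n%:R * taubar ->
    enorm (x i s - x j t) <= B) ->
  Dn taubar x n <= B.
Proof.
move=> hB; apply: ge_sup => [|_ [i' [j' [s [t [hs [ht ->]]]]]]]; last exact: hB.
set t := n%:R * taubar.
by exists (enorm (x i t - x i t)), i, i, t, t; have := window_end_mem n.
Qed.

End Diameter.

Lemma hk_dist_le_Dn {R : realType} {N d : nat} {psi : 'rV[R]_d -> 'rV[R]_d -> R}
    {tau : R -> R} {taubar : R} {x0 x : 'I_N -> R -> 'rV[R]_d} :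
  0 < taubar -> (forall t, 0 <= t -> 0 <= tau t <= taubar) ->
  (forall y z, 0 <= psi y z) -> hk_solution psi tau taubar x0 x ->
  forall (n : nat) i j s t,
    n%:R * taubar - taubar <= s -> n%:R * taubar - taubar <= t ->
    enorm (x i s - x j t) <= Dn taubar x n.
Proof.
move=> taubar_gt0 tau_range psi_ge0 x_sol n i j s t hs ht.
have x_cont := x_sol.1.
set t0 := n%:R * taubar - taubar in hs ht.
have window_end : t0 + taubar = n%:R * taubar by rewrite subrK.
have t0_ge : 0 <= t0 + taubar by rewrite window_end mulr_ge0 ?ler0n ?ltW.
have D_ge0 := Dn_ge0 taubar_gt0 x_cont i n.
have ball_window k rho : t0 <= rho <= n%:R * taubar ->
    forall l sig, t0 <= sig -> sqnorm (x l sig - x k rho) <= Dn taubar x n ^+ 2.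
  move=> hrho; apply: (hk_ball_invariant tau_range psi_ge0 x_sol t0_ge) => l sig.
  rewrite window_end => hsig.
  by rewrite -enorm_le //; exact: (le_Dn taubar_gt0 x_cont l k hsig hrho).
rewrite enorm_le // sqnormB_sym.
apply: (hk_ball_invariant tau_range psi_ge0 x_sol t0_ge _ j t ht) => l sig hsig.
by rewrite sqnormB_sym; apply: ball_window hs; rewrite -window_end.
Qed.

Theorem lemma2p2 (R : realType) (N d : nat) (taubar : R)
  (tau : R -> R) (psi : 'rV[R]_d -> 'rV[R]_d -> R)
  (x0 x : 'I_N -> R -> 'rV[R]_d) :
  (2 <= N)%N -> (1 <= d)%N -> 0 < taubar ->
  {within `[0, +oo[, continuous tau} ->
  (forall t, 0 <= t -> 0 <= tau t <= taubar) ->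
  (forall p : 'rV[R]_d * 'rV[R]_d, {for p, continuous (fun q => psi q.1 q.2)}) ->
  (exists K : R, forall y z, psi y z <= K) ->
  (forall y z, 0 < psi y z) ->
  (forall i, {within `[- taubar, 0], continuous (x0 i)}) ->
  hk_solution psi tau taubar x0 x ->
  (forall (n : nat) (i j : 'I_N) (s t : R),
      n%:R * taubar - taubar <= s -> n%:R * taubar - taubar <= t ->
      enorm (x i s - x j t) <= Dn taubar x n) /\
  (forall (i j : 'I_N) (s t : R), - taubar <= s -> - taubar <= t ->
      enorm (x i s - x j t) <= Dn taubar x 0) /\
  (forall n : nat, Dn taubar x n.+1 <= Dn taubar x n).
Proof.
move=> N_ge2 _ taubar_gt0 _ tau_range _ _ psi_gt0 _ x_sol.
have dist_le_Dn := hk_dist_le_Dn taubar_gt0 tau_range (fun y z => ltW (psi_gt0 y z)) x_sol.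
split; first exact: dist_le_Dn.
split; first by move=> i j s t; have := dist_le_Dn 0%N i j s t; rewrite mul0r sub0r.
move=> n; apply: (Dn_le taubar_gt0 (Ordinal (ltnW N_ge2))).
move=> i j s t /andP[hs _] /andP[ht _].
have earlier_window u : n.+1%:R * taubar - taubar <= u -> n%:R * taubar - taubar <= u.
  by rewrite -addn1 natrD mulrDl mul1r addrK; apply: le_trans; rewrite gerBl ltW.
by apply: dist_le_Dn; exact: earlier_window.
Qed.
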